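(* Let $N=(P,T,F,I,O)$ be a pWF net with a transition $t^*$ and a place $p^*$ such that $t^*\bullet=\{p^*\}$, $\bullet p^*=\{t^*\}$, $p^*\notin I\cup O$, and $F\cap(\bullet t^*\times p^*\bullet)=\emptyset$. Let $M$ be the net with input set $I$ and output set $O$ obtained from $N$ by removing $t^*$, $p^*$ and all edges incident to them, and adding all edges in $\bullet t^*\times p^*\bullet$ (preset and postset taken in $N$). Then $M$ is a pWF net, and if $N$ is sub-sound then $M$ is sub-sound.
   Context: Petri nets and markings. A Petri net is a triple $(P,T,F)$ with $P$ a finite set of places, $T$ a finite set of transitions, $P\cap T=\emptyset$, and $F\subseteq (P\times T)\cup(T\times P)$. For a node $x$, $\bullet x=\{y\mid (y,x)\in F\}$, $x\bullet=\{y\mid (x,y)\in F\}$. A marking is a multiset over $P$ (a function $P\to\mathbb N$); sets of places are identified with bags of multiplicity one, $+,-,\le$ are pointwise, and $k.m$ is the sum of $k$ copies of $m$. Transition $t$ is enabled at $m$ iff $\bullet t\le m$, firing gives $m-\bullet t+t\bullet$, and $m\xrightarrow{*}m'$ denotes reachability by a finite (possibly empty) firing sequence. A pWF net is $(P,T,F,I,O)$ with $(P,T,F)$ a Petri net, $I,O\subseteq P$ non-empty (input/output places), every node reachable by a directed path from some node of $I$, and some node of $O$ reachable from every node; input places may have incoming edges and output places outgoing edges. Sub-soundness. A pWF net is sub-sound if for all integers $k\ge k'\ge 0$ and every marking $m'$: if $k.I\xrightarrow{*}m'+k'.O$ then $m'\xrightarrow{*}(k-k').O$. *)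

From Stdlib Require Relation_Operators.
From mathcomp Require Import all_boot.
Set Implicit Arguments. Unset Strict Implicit. Unset Printing Implicit Defensive.

(* A Petri net (P,T,F) over finite types of places P and transitions T.
   F is given by two boolean relations: fPT p t <-> (p,t) \in F,
   fTP t p <-> (t,p) \in F.  Nodes are P + T. *)

Definition marking (P : finType) := {ffun P -> nat}.

Section Net.
Variables (P T : finType) (fPT : P -> T -> bool) (fTP : T -> P -> bool).

Definition flow (x y : P + T) : bool :=
  match x, y with
  | inl p, inr t => fPT p t
  | inr t, inl p => fTP t p
  | _, _ => false
  end.

Definition pWF (I O : {set P}) : Prop :=
  [/\ I != set0, O != set0,
      (forall x : P + T, exists2 i, i \in I & connect flow (inl i) x) &
      (forall x : P + T, exists2 o, o \in O & connect flow x (inl o))].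

Definition preset_m (t : T) : marking P := [ffun p => nat_of_bool (fPT p t)].
Definition postset_m (t : T) : marking P := [ffun p => nat_of_bool (fTP t p)].

Definition enabled (t : T) (m : marking P) : Prop :=
  forall p, preset_m t p <= m p.

Definition fire (t : T) (m : marking P) : marking P :=
  [ffun p => m p - preset_m t p + postset_m t p].

Definition step (m m' : marking P) : Prop :=
  exists t, enabled t m /\ m' = fire t m.

Definition reach : marking P -> marking P -> Prop := Relation_Operators.clos_refl_trans (marking P) step.

Definition scale_set (k : nat) (A : {set P}) : marking P :=
  [ffun p => k * nat_of_bool (p \in A)].

Definition madd (m1 m2 : marking P) : marking P := [ffun p => m1 p + m2 p].

Definition sub_sound (I O : {set P}) : Prop :=
  forall (k k' : nat) (m' : marking P), k' <= k ->
    reach (scale_set k I) (madd m' (scale_set k' O)) ->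
    reach m' (scale_set (k - k') O).

End Net.

Section Reduce.
Variables (P T : finType) (fPT : P -> T -> bool) (fTP : T -> P -> bool)
          (ts : T) (ps : P).

Definition Pplace := {p : P | p != ps}.
Definition Ttrans := {t : T | t != ts}.

Definition red_fPT (p : Pplace) (t : Ttrans) : bool :=
  fPT (val p) (val t) || (fPT (val p) ts && fPT ps (val t)).
Definition red_fTP (t : Ttrans) (p : Pplace) : bool := fTP (val t) (val p).

Definition red_set (A : {set P}) : {set Pplace} := [set p : Pplace | val p \in A].
End Reduce.
Arguments red_fPT {P T} fPT ts ps.
Arguments red_fTP {P T} fTP ts ps.
Arguments red_set {P} ps A.

From Stdlib Require Import Relation_Operators.
From mathcomp Require Import all_boot zify.
Set Implicit Arguments. Unset Strict Implicit. Unset Printing Implicit Defensive.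

(* A directed path of N is simulated in M: a visit of the
   removed nodes t_star, p_star is entered from a place of pre(t_star) and
   left towards a transition of post(p_star), and M has an edge between
   these two.  This is a generic simulation argument on the reflexive-
   transitive closure ([connect_simulation]), used forwards from I and, on
   the reversed flow relations, backwards to O.

   Markings are transported both ways.  A marking of M lifts to
   N with p_star empty; an M-step of t fires t_star first when t consumes
   from p_star, so M-runs lift to N-runs.  Conversely a marking of N
   projects to M by giving the tokens of p_star back to pre(t_star)
   (un-firing t_star); firing t_star is invisible after projection and every
   other step projects to an M-step.  Sub-soundness transfers because
   lifting and projection preserve k.I and k.O and projection undoes
   lifting. *)

Lemma connect_simulation (A B : finType) (e : rel A) (e' : rel B) (R : B -> A -> Prop) :
  (forall a a' b, e a a' -> R b a -> exists2 b', connect e' b b' & R b' a') ->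
  forall a a' b, connect e a a' -> R b a -> exists2 b', connect e' b b' & R b' a'.
Proof.
move=> sim a a' b /connectP[p]; elim: p a b => [|a1 p IH] a b /=.
  by move=> _ -> Rba; exists b.
case/andP=> ea pth a'_last Rba.
have [b1 c1 R1] := sim _ _ _ ea Rba.
have [b2 c2 R2] := IH _ _ pth a'_last R1.
by exists b2; first exact: connect_trans c1 c2.
Qed.

Lemma clos_rt_map (A B : Type) (R : A -> A -> Prop) (S : B -> B -> Prop) (f : A -> B) :
  (forall x y, R x y -> clos_refl_trans B S (f x) (f y)) ->
  forall x y, clos_refl_trans A R x y -> clos_refl_trans B S (f x) (f y).
Proof.
move=> sim x y; elim=> [a b /sim //|a|a b c _ ab _ bc]; first exact: rt_refl.
exact: rt_trans ab bc.
Qed.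

Section Firing.
Variables (P T : finType) (fPT : P -> T -> bool) (fTP : T -> P -> bool).

Lemma presetE t p : preset_m fPT t p = fPT p t.
Proof. by rewrite ffunE. Qed.

Lemma fireE t m p : fire fPT fTP t m p = m p - fPT p t + fTP t p.
Proof. by rewrite !ffunE. Qed.

Lemma reach_fire t m : enabled fPT t m -> reach fPT fTP m (fire fPT fTP t m).
Proof. by move=> en; apply: rt_step; exists t. Qed.
End Firing.

Section Reduction.
Variables (P T : finType) (fPT : P -> T -> bool) (fTP : T -> P -> bool) (ts : T) (ps : P).
Hypothesis post_ts : forall p, fTP ts p = (p == ps).
Hypothesis pre_ps : forall t, fTP t ps = (t == ts).
Hypothesis no_shortcut : forall p t, fPT p ts -> fPT ps t -> ~~ fPT p t.

Local Notation PM := (Pplace ps).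
Local Notation TM := (Ttrans ts).
Local Notation fN := (flow fPT fTP).
Local Notation rPT := (red_fPT fPT ts ps).
Local Notation rTP := (red_fTP fTP ts ps).
Local Notation fM := (flow rPT rTP).

(* p_star is not in pre(t_star): otherwise (p_star, t_star) would itself
   be a forbidden pre(t_star) x post(p_star) edge. *)
Lemma ps_not_pre_ts : fPT ps ts = false.
Proof. by apply/negP => h; move: (no_shortcut h h); rewrite h. Qed.

Definition embed (x : PM + TM) : P + T :=
  match x with inl q => inl (val q) | inr t => inr (val t) end.

Lemma embed_inj : injective embed.
Proof. by case=> [q|t] [q'|t'] //= [/val_inj ->]. Qed.

Definition removed (y : P + T) : bool := (y == inr ts) || (y == inl ps).

Lemma embed_kept x : ~~ removed (embed x).
Proof.
rewrite /removed; case: x => [[q hq]|[t ht]]; apply/negP => /orP[] /eqP // [e].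
- by rewrite e eqxx in hq.
- by rewrite e eqxx in ht.
Qed.

Lemma kept_embed y : ~~ removed y -> exists x, embed x = y.
Proof.
case: y => [p|t] kept.
  have hp : p != ps by apply: contraNneq kept => ->; rewrite /removed eqxx orbT.
  by exists (inl (Sub p hp)).
have ht : t != ts by apply: contraNneq kept => ->; rewrite /removed eqxx.
by exists (inr (Sub t ht)).
Qed.

Lemma flow_embed x x' : fN (embed x) (embed x') -> fM x x'.
Proof. by case: x x' => [q|t] [q'|t'] //= h; rewrite /red_fPT /red_fTP h. Qed.

(* [fwd_rep z y]: the M-node z stands for the N-node y on forward paths,
   either being y itself or, if y is t_star or p_star, a place of pre(t_star). *)
Definition fwd_rep (z : PM + TM) (y : P + T) : Prop :=
  embed z = y \/ removed y /\ (if z is inl q then fPT (val q) ts else false).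

Lemma fwd_rep_step y y' z : fN y y' -> fwd_rep z y -> exists2 z', connect fM z z' & fwd_rep z' y'.
Proof.
move=> e rep; case: rep e => [<- e|[rem_y pre_z] e].
  have [rem_y'|/kept_embed[z' ey']] := boolP (removed y'); last first.
    by exists z'; [apply/connect1/flow_embed; rewrite ey'|left].
  exists z => //; right; split=> //.
  case/orP: rem_y' e => /eqP ->; case: z => [q|t] //=.
  by rewrite pre_ps => /eqP tts; move: (valP t); rewrite /= tts eqxx.
case: z pre_z => [q|//] pre_q.
case/orP: rem_y e => /eqP ->; case: y' => [p|t] //=.
  by rewrite post_ts => /eqP ->; exists (inl q) => //; right; rewrite /removed eqxx orbT.
move=> ps_t; have tts : t != ts by apply: contraTneq ps_t => ->; rewrite ps_not_pre_ts.
exists (inr (Sub t tts)); last by left.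
by apply: connect1; rewrite /= /red_fPT /= pre_q ps_t orbT.
Qed.

Definition bwd_rep (z : PM + TM) (y : P + T) : Prop :=
  embed z = y \/ removed y /\ (if z is inr t then fPT ps (val t) else false).

Lemma bwd_rep_step y y' z : fN y y' -> bwd_rep z y' -> exists2 z', connect fM z' z & bwd_rep z' y.
Proof.
move=> e rep; case: rep e => [<- e|[rem_y' post_z] e].
  have [rem_y|/kept_embed[z' ey]] := boolP (removed y); last first.
    by exists z'; [apply/connect1/flow_embed; rewrite ey|left].
  exists z => //; right; split=> //.
  case/orP: rem_y e => /eqP ->; case: z => [q|t] //=.
  by rewrite post_ts => /eqP qps; move: (valP q); rewrite /= qps eqxx.
case: z post_z => [//|t] ps_t.
case/orP: rem_y' e => /eqP ->; case: y => [p|t'] //=.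
  move=> p_ts; have pps : p != ps by apply: contraTneq p_ts => ->; rewrite ps_not_pre_ts.
  exists (inl (Sub p pps)); last by left.
  by apply: connect1; rewrite /= /red_fPT /= p_ts ps_t orbT.
by rewrite pre_ps => /eqP ->; exists (inr t) => //; right; rewrite /removed eqxx.
Qed.

Lemma reduced_connect_from (i : PM) x :
  connect fN (inl (val i)) (embed x) -> connect fM (inl i) x.
Proof.
move=> c; have start : fwd_rep (inl i) (inl (val i)) by left.
have [z cz [/embed_inj <- //|[]]] := connect_simulation fwd_rep_step c start.
by rewrite (negPf (embed_kept x)).
Qed.

Lemma reduced_connect_to (o : PM) x :
  connect fN (embed x) (inl (val o)) -> connect fM x (inl o).
Proof.
move=> c; have {}c : connect [rel u v | fN v u] (inl (val o)) (embed x) by rewrite connect_rev.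
have sim a a' b : fN a' a -> bwd_rep b a ->
    exists2 b', connect [rel u v | fM v u] b b' & bwd_rep b' a'.
  by move=> e /(bwd_rep_step e)[b' cb' rb']; exists b' => //; rewrite connect_rev.
have start : bwd_rep (inl o) (inl (val o)) by left.
have [z cz [/embed_inj <- |[]]] := connect_simulation sim c start.
  by move: cz; rewrite connect_rev.
by rewrite (negPf (embed_kept x)).
Qed.

Lemma kept_member (A : {set P}) a : a \in A -> ps \notin A ->
  exists2 q : PM, q \in red_set ps A & val q = a.
Proof.
move=> aA psA; have aps : a != ps by apply: contraNneq psA => <-.
by exists (Sub a aps); rewrite ?inE.
Qed.

Lemma pWF_reduced (I O : {set P}) : ps \notin I -> ps \notin O -> pWF fPT fTP I O ->
  pWF rPT rTP (red_set ps I) (red_set ps O).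
Proof.
move=> psI psO [/set0Pn[a aI] /set0Pn[b bO] fromI toO]; split.
- by have [q qI _] := kept_member aI psI; apply/set0Pn; exists q.
- by have [q qO _] := kept_member bO psO; apply/set0Pn; exists q.
- move=> x; have [i iI c] := fromI (embed x); have [q qI eq] := kept_member iI psI.
  by exists q => //; apply: reduced_connect_from; rewrite eq.
- move=> x; have [o oO c] := toO (embed x); have [q qO eq] := kept_member oO psO.
  by exists q => //; apply: reduced_connect_to; rewrite eq.
Qed.

Variant place_spec : P -> Type :=
  | PlaceRemoved : place_spec ps
  | PlaceKept (q : PM) : place_spec (val q).

Lemma placeP p : place_spec p.
Proof.
have [->|pps] := eqVneq p ps; first exact: PlaceRemoved.
exact: (PlaceKept (Sub p pps)).
Qed.

(* The preset of an M-transition t: its own preset, plus pre(t_star) when t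
   consumed from p_star; the two parts are disjoint by hypothesis. *)
Lemma red_preset (t : TM) (q : PM) :
  rPT q t = fPT (val q) (val t) + fPT ps (val t) * fPT (val q) ts :> nat.
Proof.
rewrite /red_fPT; have := @no_shortcut (val q) (val t).
by case: (fPT (val q) ts); case: (fPT ps (val t)); case: (fPT (val q) (val t)) => // /(_ isT isT).
Qed.

Definition lift (m : marking PM) : marking P := [ffun p => oapp m 0 (insub p)].

Lemma lift_ps (m : marking PM) : lift m ps = 0.
Proof. by rewrite ffunE insubF //= eqxx. Qed.

Lemma lift_val (m : marking PM) (q : PM) : lift m (val q) = m q.
Proof. by rewrite ffunE valK. Qed.

(* A marking of N seen in M: each token on p_star is returned to every
   place of pre(t_star), undoing the firing of t_star that produced it. *)
Definition proj (m : marking P) : marking PM :=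
  [ffun q => m (val q) + m ps * fPT (val q) ts].

Lemma lift_fire_direct (t : TM) (m : marking PM) : ~~ fPT ps (val t) -> enabled rPT t m ->
  enabled fPT (val t) (lift m) /\ fire fPT fTP (val t) (lift m) = lift (fire rPT rTP t m).
Proof.
move=> /negPf ps_t en; have budget (q : PM) : fPT (val q) (val t) <= m q.
  by have := en q; rewrite presetE red_preset ps_t mul0n addn0.
split=> [p|]; first by case: (placeP p) => [|q]; rewrite presetE ?ps_t ?lift_val ?budget.
apply/ffunP => p; case: (placeP p) => [|q]; rewrite fireE ?lift_ps ?lift_val.
  by rewrite ps_t pre_ps (negPf (valP t)).
by rewrite fireE red_preset ps_t mul0n addn0.
Qed.

Lemma lift_fire_via_ts (t : TM) (m : marking PM) : fPT ps (val t) -> enabled rPT t m ->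
  [/\ enabled fPT ts (lift m), enabled fPT (val t) (fire fPT fTP ts (lift m))
    & fire fPT fTP (val t) (fire fPT fTP ts (lift m)) = lift (fire rPT rTP t m)].
Proof.
move=> ps_t en; have budget (q : PM) : fPT (val q) (val t) + fPT (val q) ts <= m q.
  by have := en q; rewrite presetE red_preset ps_t mul1n.
split=> [p|p|].
- case: (placeP p) => [|q]; rewrite presetE ?ps_not_pre_ts // lift_val.
  by have := budget q; lia.
- case: (placeP p) => [|q]; rewrite presetE fireE ?lift_ps ?lift_val post_ts ?eqxx.
    by rewrite ps_t.
  by rewrite (negPf (valP q)); have := budget q; lia.
apply/ffunP => p; case: (placeP p) => [|q]; rewrite !fireE ?lift_ps ?lift_val ?fireE post_ts ?eqxx.
  by rewrite ps_not_pre_ts ps_t pre_ps (negPf (valP t)).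
by rewrite red_preset /red_fTP ps_t (negPf (valP q)); have := budget q; lia.
Qed.

Lemma proj_fire_ts (m : marking P) : enabled fPT ts m -> proj (fire fPT fTP ts m) = proj m.
Proof.
move=> en; apply/ffunP => q; rewrite !ffunE !post_ts eqxx (negPf (valP q)) ps_not_pre_ts.
by have := en (val q); rewrite presetE; case: (fPT (val q) ts) => /=; lia.
Qed.

Lemma proj_fire (t : TM) (m : marking P) : enabled fPT (val t) m ->
  enabled rPT t (proj m) /\ proj (fire fPT fTP (val t) m) = fire rPT rTP t (proj m).
Proof.
move=> en; have := en ps; rewrite presetE => en_ps.
split=> [q|].
  have := en (val q); rewrite !presetE red_preset !ffunE.
  by case: (fPT ps (val t)) en_ps; case: (fPT (val q) ts) => /=; lia.
apply/ffunP => q; have := en (val q); rewrite !fireE red_preset /red_fTP presetE !ffunE.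
rewrite pre_ps (negPf (valP t)).
by case: (fPT ps (val t)) en_ps; case: (fPT (val q) ts) => /=; lia.
Qed.

Lemma lift_reach (m m' : marking PM) :
  reach rPT rTP m m' -> reach fPT fTP (lift m) (lift m').
Proof.
apply: clos_rt_map => {m m'} m1 _ [t [en ->]].
have [ps_t|ps_t] := boolP (fPT ps (val t)).
- have [en_ts en_t <-] := lift_fire_via_ts ps_t en.
  exact: rt_trans _ _ _ _ _ (reach_fire fTP en_ts) (reach_fire fTP en_t).
- have [en_t <-] := lift_fire_direct ps_t en.
  exact: (reach_fire fTP en_t).
Qed.

Lemma proj_reach (m m' : marking P) :
  reach fPT fTP m m' -> reach rPT rTP (proj m) (proj m').
Proof.
apply: clos_rt_map => {m m'} m1 _ [t [en ->]].
case: (eqVneq t ts) en => [-> en | tts en]; first by rewrite proj_fire_ts //; exact: rt_refl.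
have [en_t ->] := proj_fire (t := Sub t tts) en.
exact: (reach_fire rTP en_t).
Qed.

Lemma lift_scale k (A : {set P}) : ps \notin A ->
  lift (scale_set k (red_set ps A)) = scale_set k A.
Proof.
move=> psA; apply/ffunP => p; case: (placeP p) => [|q]; rewrite ?lift_ps ?lift_val !ffunE.
  by rewrite (negPf psA) muln0.
by rewrite inE.
Qed.

Lemma lift_madd (m1 m2 : marking PM) : lift (madd m1 m2) = madd (lift m1) (lift m2).
Proof.
by apply/ffunP => p; case: (placeP p) => [|q]; rewrite [RHS]ffunE ?lift_ps ?lift_val ?ffunE.
Qed.

Lemma proj_lift (m : marking PM) : proj (lift m) = m.
Proof. by apply/ffunP => q; rewrite ffunE lift_ps lift_val mul0n addn0. Qed.

Lemma proj_scale k (A : {set P}) : ps \notin A ->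
  proj (scale_set k A) = scale_set k (red_set ps A).
Proof. by move=> psA; apply/ffunP => q; rewrite !ffunE (negPf psA) muln0 addn0 inE. Qed.

Lemma sub_sound_reduced (I O : {set P}) : ps \notin I -> ps \notin O ->
  sub_sound fPT fTP I O -> sub_sound rPT rTP (red_set ps I) (red_set ps O).
Proof.
move=> psI psO sound k k' m' le_k'k /lift_reach.
rewrite lift_madd !lift_scale // => /(sound _ _ _ le_k'k)/proj_reach.
by rewrite proj_lift proj_scale.
Qed.

End Reduction.

Theorem mainTheorem11 (P T : finType) (fPT : P -> T -> bool)
  (fTP : T -> P -> bool) (I O : {set P}) (ts : T) (ps : P) :
  pWF fPT fTP I O ->
  (forall p, fTP ts p = (p == ps)) ->            (* post t_star = {p_star} *)
  (forall t, fTP t ps = (t == ts)) ->            (* pre p_star = {t_star} *)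
  ps \notin I -> ps \notin O ->
  (forall p t, fPT p ts -> fPT ps t -> ~~ fPT p t) ->  (* F meets no pre(t_star) x post(p_star) pair *)
  pWF (red_fPT fPT ts ps) (red_fTP fTP ts ps) (red_set ps I) (red_set ps O) /\
  (sub_sound fPT fTP I O ->
   sub_sound (red_fPT fPT ts ps) (red_fTP fTP ts ps) (red_set ps I) (red_set ps O)).
Proof.
move=> wf post_ts pre_ps psI psO no_shortcut; split.
- exact: pWF_reduced.
- exact: sub_sound_reduced.
Qed.
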